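(* Let $F$ be a field, $n\ge1$, and $g\in\mathrm{GL}_n(F)$. Suppose that $\lambda\in F$, $\lambda\neq0$, and that $g-\lambda 1$ has rank $r$. Let $\varphi_1,\varphi_2$ be non-negative real numbers with $\varphi_1+\varphi_2=r$. Then: (a) there exist $h,k\in\mathrm{GL}_n(F)$ with $g=hk$ such that $|\mathrm{rk}(h-\lambda1)-\varphi_1|\le2$ and $|\mathrm{rk}(k-1)-\varphi_2|\le2$; (b) if moreover $g\in\mathrm{SL}_n(F)$, then there exist $h,k\in\mathrm{SL}_n(F)$ with $g=hk$ such that $|\mathrm{rk}(h-\lambda1)-\varphi_1|\le3$ and $|\mathrm{rk}(k-1)-\varphi_2|\le3$.
   Context: $1$ denotes the $n\times n$ identity matrix. *)

From mathcomp Require Import all_boot all_algebra.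
From Stdlib Require Import Reals.
Set Implicit Arguments. Unset Strict Implicit. Unset Printing Implicit Defensive.
Import GRing.Theory.

Definition inGL (F : fieldType) (n : nat) (g : 'M[F]_n) : Prop := g \in unitmx.
Definition inSL (F : fieldType) (n : nat) (g : 'M[F]_n) : Prop :=
  determinant g = GRing.one F.

Definition rkR (F : fieldType) (n : nat) (A : 'M[F]_n) : R := INR (\rank A).

From Stdlib Require Import Reals Lra.
From mathcomp Require Import all_boot all_algebra zify.
Set Implicit Arguments. Unset Strict Implicit. Unset Printing Implicit Defensive.
Import GRing.Theory.

(* Starting from h = lam 1 and moving towards g by rank-one steps that keep h
   invertible and lower rk (g - h), one reaches for every t <= r an invertible
   h with rk (h - lam 1) = t and rk (g - h) = r - t; then k = h^-1 g has
   rk (k - 1) = rk (g - h), so with t within 1 of phi1 both errors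
   are at most 1.  A step exists because the Wedderburn rank-one reduction
   C - (Cx)(yC)/(yCx) of C = g - h stays invertible after adding h exactly when
   yC h^-1 g x != 0 (Sherman-Morrison), and x, y can be chosen so that both
   yCx and yC h^-1 g x are nonzero.  For SL, correcting the determinant of h by
   a diagonal matrix moves each rank by at most one. *)

Local Open Scope ring_scope.

Lemma raddf_neq0_common {V W1 W2 : zmodType}
    (f1 : {additive V -> W1}) (f2 : {additive V -> W2}) :
  (exists x, f1 x != 0) -> (exists x, f2 x != 0) ->
  exists x, f1 x != 0 /\ f2 x != 0.
Proof.
move=> [x1 f1x1] [x2 f2x2].
have [f2x1|] := eqVneq (f2 x1) 0; last by exists x1.
have [f1x2|] := eqVneq (f1 x2) 0; last by exists x2.
by exists (x1 + x2); rewrite !raddfD f2x1 f1x2 addr0 add0r.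
Qed.

Section RankOneSteps.
Variable F : fieldType.

Lemma mx11_neq0 (S : 'M[F]_1) : (S != 0) = (S 0 0 != 0).
Proof.
by rewrite {1}[S]mx11_scalar -scalemx1 scalemx_eq0 (negbTE (matrix_nonzero1 F 0)) orbF.
Qed.

Lemma exists_mulmx_col_neq0 m n (A : 'M[F]_(m, n)) :
  A != 0 -> exists x : 'cV_n, A *m x != 0.
Proof.
rewrite matrix_eq0 => /forallPn[i /forallPn[j Aij]].
exists (delta_mx j 0); rewrite -colE; apply: contra Aij => /eqP/matrixP/(_ i 0).
by rewrite !mxE => ->.
Qed.

Lemma exists_mulmx_row_neq0 m n (A : 'M[F]_(m, n)) :
  A != 0 -> exists y : 'rV_m, y *m A != 0.
Proof.
rewrite matrix_eq0 => /forallPn[i /forallPn[j Aij]].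
exists (delta_mx 0 i); rewrite -rowE; apply: contra Aij => /eqP/matrixP/(_ 0 j).
by rewrite !mxE => ->.
Qed.

Lemma exists_rowcol_neq0 m n (A B : 'M[F]_(m, n)) : A != 0 -> B != 0 ->
  exists x : 'cV_n, exists y : 'rV_m,
    (y *m A *m x) 0 0 != 0 /\ (y *m B *m x) 0 0 != 0.
Proof.
move=> A0 B0.
have [x [Ax Bx]] := @raddf_neq0_common _ _ _ (mulmx A) (mulmx B)
  (exists_mulmx_col_neq0 A0) (exists_mulmx_col_neq0 B0).
have [y [yAx yBx]] := @raddf_neq0_common _ _ _ (mulmxr (A *m x)) (mulmxr (B *m x))
  (exists_mulmx_row_neq0 Ax) (exists_mulmx_row_neq0 Bx).
by exists x, y; rewrite -!mx11_neq0 -!mulmxA.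
Qed.

Lemma mxrank_subC m n (A B : 'M[F]_(m, n)) : \rank (A - B) = \rank (B - A).
Proof. by rewrite -mxrank_opp opprB. Qed.

Lemma mxrank_sub_triangle m n (A B C : 'M[F]_(m, n)) :
  (\rank (A - C)%R <= \rank (A - B)%R + \rank (B - C)%R)%N.
Proof. by rewrite -(subrKA B) mxrank_add. Qed.

Lemma mxrank_sub_rank1_near m n (A B C : 'M[F]_(m, n)) : (\rank (A - B)%R <= 1)%N ->
  (\rank (A - C)%R <= \rank (B - C)%R + 1)%N /\ (\rank (B - C)%R <= \rank (A - C)%R + 1)%N.
Proof.
move=> AB1; split.
  by apply: leq_trans (mxrank_sub_triangle A B C) _; rewrite addnC leq_add2l.
apply: leq_trans (mxrank_sub_triangle B A C) _.
by rewrite addnC leq_add2l mxrank_subC.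
Qed.

Lemma unitmx_rank1_update n (h : 'M[F]_n) (u : 'cV_n) (v : 'rV_n) :
  h \in unitmx -> 1 + (v *m invmx h *m u) 0 0 != 0 -> h + u *m v \in unitmx.
Proof.
set hi := invmx h; set c := (v *m hi *m u) 0 0 => hU c1.
have vhu : v *m hi *m u = c%:M by apply: mx11_scalar.
suff : (h + u *m v) *m (hi - (1 + c)^-1 *: (hi *m u *m (v *m hi))) = 1%:M.
  by case/mulmx1_unit.
have uvhu : u *m v *m (hi *m u *m (v *m hi)) = c *: (u *m v *m hi).
  have -> : u *m v *m (hi *m u *m (v *m hi)) = u *m (v *m hi *m u) *m (v *m hi).
    by rewrite !mulmxA.
  by rewrite vhu mul_mx_scalar -scalemxAl mulmxA.
rewrite mulmxDl !mulmxBr -!scalemxAr uvhu mulmxV // !mulmxA mulmxV // mul1mx.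
rewrite scalerA -{2}[u *m v *m hi]scale1r -scalerBl.
have -> : 1 - (1 + c)^-1 * c = (1 + c)^-1.
  by rewrite -{1}(mulVf c1) mulrDr mulr1 addrK.
by rewrite subrK.
Qed.

Lemma mxrank_rank1_downdate m n (C : 'M[F]_(m, n)) (x : 'cV_n) (y : 'rV_m) a :
  y *m C *m x = a%:M -> a != 0 ->
  (\rank (C - a^-1 *: (C *m x *m (y *m C)))%R < \rank C)%N.
Proof.
set C' := C - _ => yCx a0.
have yC0 : (y <= kermx C)%MS = false.
  rewrite sub_kermx; apply: contraNF a0 => /eqP yC0.
  by move: yCx; rewrite yC0 mul0mx => /matrixP/(_ 0 0); rewrite !mxE eqxx mulr1n => <-.
have yC'0 : (kermx C + y <= kermx C')%MS.
  rewrite addsmx_sub !sub_kermx /C' !mulmxBr -!scalemxAr !mulmxA.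
  have /eqP KC0 : kermx C *m C == 0 by rewrite -sub_kermx.
  rewrite KC0 !mul0mx scaler0 subr0 eqxx /=.
  by rewrite yCx mul_scalar_mx -scalemxAl scalerA mulVf // scale1r subrr.
have KltKy : (kermx C < kermx C + y)%MS.
  by rewrite ltmxE addsmxSl addsmx_sub yC0 andbF.
have := leq_trans (rank_ltmx KltKy) (mxrankS yC'0); rewrite !mxrank_ker.
have := rank_leq_row C; have := rank_leq_row C'; lia.
Qed.

Lemma exists_rank1_unitmx_step n (g h : 'M[F]_n) :
  g \in unitmx -> h \in unitmx -> g != h ->
  exists E : 'M_n, [/\ (\rank E <= 1)%N, h + E \in unitmx
                    & (\rank (g - (h + E))%R < \rank (g - h)%R)%N].
Proof.
move=> gU hU; rewrite -subr_eq0; set C := g - h => C0.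
set M := C *m invmx h *m g.
have M0 : M != 0.
  apply: contra C0 => /eqP M0.
  by rewrite -[C](mulmxKV hU) -[C *m invmx h](mulmxK gU) -/M M0 !mul0mx.
have [x [y [a0 b0]]] := exists_rowcol_neq0 C0 M0.
set a := (y *m C *m x) 0 0 in a0 *; set b := (y *m M *m x) 0 0 in b0.
have yCx : y *m C *m x = a%:M by apply: mx11_scalar.
have yMx : y *m M *m x = b%:M by apply: mx11_scalar.
have ChC : C *m invmx h *m C = M - C by rewrite {2}/C mulmxBr mulmxKV.
have yChCx : y *m C *m invmx h *m (C *m x) = (b - a)%:M.
  have -> : y *m C *m invmx h *m (C *m x) = y *m (C *m invmx h *m C) *m x.
    by rewrite !mulmxA.
  by rewrite ChC mulmxBr mulmxBl yMx yCx raddfB.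
exists (a^-1 *: (C *m x *m (y *m C))); split.
- apply: leq_trans (mxrank_scale _ _) _.
  exact: leq_trans (mxrankM_maxl _ _) (rank_leq_col _).
- rewrite scalemxAl; apply: unitmx_rank1_update => //.
  rewrite -scalemxAr mxE yChCx mxE eqxx mulr1n.
  by rewrite mulrBr mulVf // addrC subrK mulf_neq0 ?invr_eq0.
- rewrite opprD addrA; exact: mxrank_rank1_downdate.
Qed.

Lemma exists_unitmx_rank_split n (g h0 : 'M[F]_n) (t : nat) :
  g \in unitmx -> h0 \in unitmx -> (t <= \rank (g - h0)%R)%N ->
  exists2 h : 'M[F]_n, h \in unitmx &
    \rank (h - h0) = t :> nat /\ \rank (g - h) = (\rank (g - h0)%R - t)%N :> nat.
Proof.
move=> gU h0U tr; set r := \rank (g - h0).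
suff [h hU [hh0 gh]] : exists2 h : 'M[F]_n, h \in unitmx &
    (\rank (h - h0)%R <= t)%N /\ (\rank (g - h)%R + t <= r)%N.
  by exists h => //; have := mxrank_sub_triangle g h h0; lia.
elim: t tr => [_|t IH tr]; first by exists h0; rewrite ?subrr ?mxrank0 ?addn0.
have [h hU [hh0 gh]] := IH (ltnW tr).
have gh0 : g != h.
  apply: contraTneq tr => gh_eq; have := mxrank_sub_triangle g h h0.
  by rewrite gh_eq subrr mxrank0; lia.
have [E [E1 hEU ghE]] := exists_rank1_unitmx_step gU hU gh0.
exists (h + E) => //; split; last by lia.
by rewrite addrAC -addn1 (leq_trans (mxrank_add _ _)) ?leq_add.
Qed.

Lemma mxrank_invmx_mul_sub1 n (g h : 'M[F]_n) :
  h \in unitmx -> \rank (invmx h *m g - 1%:M) = \rank (g - h).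
Proof.
move=> hU; rewrite -[1%:M](mulVmx hU) -mulmxBr.
by rewrite eqmxMfull // row_full_unit unitmx_inv.
Qed.

Lemma exists_det1_rank1_perturbation n (h : 'M[F]_n) : (0 < n)%N ->
  h \in unitmx -> exists2 h' : 'M[F]_n, \det h' = 1 & (\rank (h' - h)%R <= 1)%N.
Proof.
move=> n0 hU; pose i0 := Ordinal n0; set d := \det h.
have d0 : d != 0 by rewrite -unitfE -unitmxE.
pose D : 'M[F]_n := diag_mx (\row_j (if j == i0 then d^-1 else 1)).
have detD : \det D = d^-1.
  rewrite det_diag (bigD1 i0) //= mxE eqxx big1 ?mulr1 // => j /negbTE ji0.
  by rewrite mxE ji0.
have D1 : D - 1%:M = (d^-1 - 1) *: delta_mx i0 i0.
  apply/matrixP => i j; rewrite !mxE.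
  case: (i =P i0) => [->|_]; case: (j =P i0) => [->|/eqP nj] /=;
    rewrite ?eqxx ?mulr1n ?mulr1 ?mulr0 ?subrr //.
  by rewrite eq_sym (negbTE nj) subrr.
exists (h *m D); first by rewrite det_mulmx detD mulfV.
rewrite -[X in _ - X]mulmx1 -mulmxBr D1.
apply: leq_trans (mxrankM_maxr _ _) _.
by apply: leq_trans (mxrank_scale _ _) _; rewrite mxrank_delta.
Qed.

End RankOneSteps.

Section RealBounds.
Local Open Scope R_scope.

Lemma exists_nat_near (r : nat) (p : R) : 0 <= p <= INR r ->
  exists2 t, (t <= r)%N & Rabs (INR t - p) <= 1.
Proof.
elim: r => [|r IH] p_r; first by exists 0%N => //; simpl in *; split_Rabs; lra.
have [p_le|p_gt] := Rle_lt_dec p (INR r).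
  by have [t tr t_near] := IH (conj (proj1 p_r) p_le); exists t => //; exact: leqW.
by exists r.+1 => //; rewrite S_INR in p_r *; split_Rabs; lra.
Qed.

Lemma exists_nat_split_near (r : nat) (p1 p2 : R) :
  0 <= p1 -> 0 <= p2 -> p1 + p2 = INR r ->
  exists t, [/\ (t <= r)%N, Rabs (INR t - p1) <= 1 & Rabs (INR (r - t) - p2) <= 1].
Proof.
move=> p1_ge0 p2_ge0 p_sum.
have [|t tr t_near] := @exists_nat_near r p1; first by lra.
exists t; split=> //; rewrite minus_INR; last exact/leP.
by split_Rabs; lra.
Qed.

Lemma Rabs_INR_near_le (a t m k : nat) (p : R) :
  (m < k)%N -> Rabs (INR t - p) <= 1 -> (a <= t + m)%N -> (t <= a + m)%N ->
  Rabs (INR a - p) <= INR k.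
Proof.
move=> /leP/le_INR; rewrite S_INR => mk t_near.
move=> /leP/le_INR; rewrite plus_INR => a_le /leP/le_INR; rewrite plus_INR => t_le.
by split_Rabs; lra.
Qed.

End RealBounds.

Theorem lemma2p3 (F : fieldType) (n : nat) (g : 'M[F]_n) (lam : F)
  (r : nat) (phi1 phi2 : R) :
  leq 1 n -> inGL g -> lam != 0 ->
  \rank (g - lam%:M) = r ->
  Rle R0 phi1 -> Rle R0 phi2 -> Rplus phi1 phi2 = INR r ->
  (exists h k : 'M[F]_n, [/\ inGL h, inGL k, g = h *m k,
     Rle (Rabs (Rminus (rkR (h - lam%:M)) phi1)) (INR 2) &
     Rle (Rabs (Rminus (rkR (k - 1%:M)) phi2)) (INR 2)]) /\
  (inSL g ->
   exists h k : 'M[F]_n, [/\ inSL h, inSL k, g = h *m k,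
     Rle (Rabs (Rminus (rkR (h - lam%:M)) phi1)) (INR 3) &
     Rle (Rabs (Rminus (rkR (k - 1%:M)) phi2)) (INR 3)]).
Proof.
move=> n_gt0 gU lam0 rk phi1_ge0 phi2_ge0 phi_sum.
have [t [tr t_near rt_near]] := exists_nat_split_near phi1_ge0 phi2_ge0 phi_sum.
have lamU : (lam%:M : 'M[F]_n) \in unitmx.
  by rewrite unitmxE det_scalar unitfE expf_neq0.
rewrite -rk in tr rt_near.
have [h hU [h_rk gh_rk]] := exists_unitmx_rank_split gU lamU tr.
split.
  exists h, (invmx h *m g); split.
  - exact: hU.
  - by rewrite /inGL unitmx_mul unitmx_inv hU.
  - by rewrite mulKVmx.
  - by apply: (Rabs_INR_near_le (m := 0)) t_near _ _; rewrite // h_rk addn0.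
  - rewrite /rkR mxrank_invmx_mul_sub1 //.
    by apply: (Rabs_INR_near_le (m := 0)) rt_near _ _; rewrite // gh_rk addn0.
move=> gS; have [h' h'_det h'h_rk] := exists_det1_rank1_perturbation n_gt0 hU.
have h'U : h' \in unitmx by rewrite unitmxE h'_det unitr1.
have [h'_le h'_ge] := mxrank_sub_rank1_near lam%:M h'h_rk.
have [gh'_le gh'_ge] := mxrank_sub_rank1_near g h'h_rk.
rewrite !(mxrank_subC _ g) h_rk gh_rk in h'_le h'_ge gh'_le gh'_ge.
exists h', (invmx h' *m g); split.
- exact: h'_det.
- by rewrite /inSL det_mulmx det_inv h'_det invr1 mul1r.
- by rewrite mulKVmx.
- exact: (Rabs_INR_near_le (m := 1)) t_near h'_le h'_ge.
- rewrite /rkR mxrank_invmx_mul_sub1 //.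
  exact: (Rabs_INR_near_le (m := 1)) rt_near gh'_le gh'_ge.
Qed.
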